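(* Consider the data-center model with three levels of data locality operated under the Balanced-Pandas algorithm (see context). For every arrival rate vector $\boldsymbol\lambda\in\Lambda$, the Markov chain $\{Z(t)=(\bar{\mathbf Q}(t),\mathbf f(t)),t\ge0\}$ is positive recurrent; i.e., Balanced-Pandas is throughput optimal.
   Context: Model. Time is slotted. There are $M$ servers $\mathcal M=\{1,\dots,M\}$ partitioned into racks; $K(m)$ is the rack of server $m$. A task type $\bar L$ is a $3$-element subset of $\mathcal M$; $\mathcal L$ is the set of types. For type $\bar L$, servers in $\bar L$ are local, $\bar L_k=\{m\notin\bar L:\exists n\in\bar L,K(m)=K(n)\}$ rack-local, $\bar L_r=\mathcal M\setminus(\bar L\cup\bar L_k)$ remote. At the start of slot $t$, $A_{\bar L}(t)$ type-$\bar L$ tasks arrive (independent across types, i.i.d. over time, mean $\lambda_{\bar L}$, total per slot bounded). Service times are geometric with means $1/\alpha,1/\beta,1/\gamma$ for local, rack-local, remote service, $1\ge\alpha>\beta>\gamma>0$; one task per server at a time, non-preemptive. Capacity region $\Lambda$: the set of $\boldsymbol\lambda$ for which there exist $\lambda_{\bar L,m}\ge0$ with $\lambda_{\bar L}=\sum_m\lambda_{\bar L,m}$ and $\sum_{\bar L:m\in\bar L}\lambda_{\bar L,m}/\alpha+\sum_{\bar L:m\in\bar L_k}\lambda_{\bar L,m}/\beta+\sum_{\bar L:m\in\bar L_r}\lambda_{\bar L,m}/\gamma<1$ for all $m$. Balanced-Pandas. Each server $m$ has three sub-queues $Q^l_m,Q^k_m,Q^r_m$ holding tasks routed to $m$ that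 are local, rack-local, remote to $m$ respectively. Workload $W_m(t)=Q^l_m(t)/\alpha+Q^k_m(t)/\beta+Q^r_m(t)/\gamma$. Routing: an arriving type-$\bar L$ task is routed to a server in $\arg\min_{m\in\mathcal M}\{\frac{W_m(t)}{\alpha}I_{\{m\in\bar L\}},\frac{W_m(t)}{\beta}I_{\{m\in\bar L_k\}},\frac{W_m(t)}{\gamma}I_{\{m\in\bar L_r\}}\}$ (ties random), joining its local, rack-local or remote sub-queue accordingly. Scheduling: an idle server $m$ serves a task from $Q^l_m$ if nonempty, else from $Q^k_m$ if nonempty, else from $Q^r_m$, else stays idle. Working status $f_m(t)\in\{-1,0,1,2\}$: idle, serving from $Q^l_m$, $Q^k_m$, $Q^r_m$. $\bar{\mathbf Q}(t)$ is the vector of all sub-queue lengths, $\mathbf f(t)=(f_1,\dots,f_M)$. Throughput optimal: the chain is positive recurrent for every $\boldsymbol\lambda\in\Lambda$. *)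

(* Balanced-Pandas with three levels of data locality,
   modelled as a discrete-time Markov chain with an explicit one-step
   transition law (finitely supported, since arrivals are bounded). *)
From mathcomp Require Import all_boot all_order all_algebra.
From mathcomp Require Import reals.
Set Implicit Arguments. Unset Strict Implicit. Unset Printing Implicit Defensive.
Import Order.TTheory GRing.Theory Num.Theory.
Local Open Scope ring_scope.

Section FinDist.
Variable R : numDomainType.
Definition dist (T : Type) := seq (R * T).
Definition dret (T : Type) (x : T) : dist T := [:: (1, x)].
Definition dbind (T U : Type) (d : dist T) (f : T -> dist U) : dist U :=
  flatten [seq [seq (p.1 * q.1, q.2) | q <- f p.2] | p <- d].
Definition dprob (T : eqType) (d : dist T) (y : T) : R :=
  \sum_(p <- d | p.2 == y) p.1.
Definition diter (T A : Type) (f : T -> A -> dist T) (s : seq A) (x : T) : dist T :=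
  foldl (fun d a => dbind d (fun y => f y a)) (dret x) s.
Definition is_pmf (T : Type) (d : dist T) : Prop :=
  all (fun p => 0 <= p.1) d /\ \sum_(p <- d) p.1 = 1.
Definition mean (d : dist nat) : R := \sum_(p <- d) p.1 * (p.2)%:R.
End FinDist.
Arguments dret {R T} x.
Arguments dbind {R T U} d f.
Arguments diter {R T A} f s x.
Arguments dprob {R T} d y.
Arguments is_pmf {R T} d.
Arguments mean {R} d.

Section Model.
Variable R : realType.
(* M servers; K m = rack of server m; service rates alpha, beta, gamma *)
Variables (M : nat) (K : 'I_M -> nat) (alpha beta gamma : R).

(* sub-queue / locality classes: 0 = local, 1 = rack-local, 2 = remote *)
Definition Cl : 'I_3 := @Ordinal 3 0 isT.
Definition Ck : 'I_3 := @Ordinal 3 1 isT.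
Definition Cr : 'I_3 := @Ordinal 3 2 isT.
Definition rate (c : 'I_3) : R :=
  if c == Cl then alpha else if c == Ck then beta else gamma.

Definition cls (L : {set 'I_M}) (m : 'I_M) : 'I_3 :=
  if m \in L then Cl else if [exists n in L, K n == K m] then Ck else Cr.

Definition is_type (L : {set 'I_M}) : bool := #|L| == 3%N.
Definition types : seq {set 'I_M} := enum [pred L : {set 'I_M} | is_type L].

(* state: sub-queue lengths Q (m, c) and working status f m
   (None = idle (-1), Some c = serving a task taken from sub-queue c) *)
Definition qstate := {ffun 'I_M * 'I_3 -> nat}.
Definition fstate := {ffun 'I_M -> option 'I_3}.
Definition state := (qstate * fstate)%type.

Definition W (Q : qstate) (m : 'I_M) : R := \sum_(c < 3) (Q (m, c))%:R / rate c.
Definition cost (Q : qstate) (L : {set 'I_M}) (m : 'I_M) : R := W Q m / rate (cls L m).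
Definition best (Q : qstate) (L : {set 'I_M}) : {set 'I_M} :=
  [set m | [forall m', cost Q L m <= cost Q L m']].
Definition unif (S : {set 'I_M}) : dist R 'I_M := [seq (#|S|%:R^-1, m) | m <- enum S].
Definition incq (Q : qstate) (i : 'I_M * 'I_3) : qstate := [ffun j => (Q j + (j == i))%N].

(* route one type-L task, workloads taken at the start of the slot (Q0),
   ties broken uniformly at random *)
Definition route1 (Q0 : qstate) (L : {set 'I_M}) (Q : qstate) : dist R qstate :=
  dbind (unif (best Q0 L)) (fun m => dret (incq Q (m, cls L m))).

(* arr L = distribution of the number of type-L arrivals in a slot *)
Variable arr : {set 'I_M} -> dist R nat.
Definition arrive_type (Q0 Q : qstate) (L : {set 'I_M}) : dist R qstate :=
  dbind (arr L) (fun n => diter (fun Q' (_ : nat) => route1 Q0 L Q') (iota 0 n) Q).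
Definition arrive (Q0 : qstate) : dist R qstate := diter (arrive_type Q0) types Q0.

Definition pickq (Q : qstate) (m : 'I_M) : option 'I_3 :=
  if (0 < Q (m, Cl))%N then Some Cl
  else if (0 < Q (m, Ck))%N then Some Ck
  else if (0 < Q (m, Cr))%N then Some Cr else None.
Definition newf (Q : qstate) (f : fstate) : fstate :=
  [ffun m => if f m is Some c then Some c else pickq Q m].
(* a task leaves its sub-queue when it enters service *)
Definition newQ (Q : qstate) (f : fstate) : qstate :=
  [ffun i => (Q i - ((f i.1 == None) && (pickq Q i.1 == Some i.2)))%N].

(* geometric services: a busy server completes its task w.p. rate c *)
Definition serve1 (f : fstate) (m : 'I_M) : dist R fstate :=
  if f m is Some c then
    [:: (rate c, [ffun j => if j == m then None else f j]); (1 - rate c, f)]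
  else dret f.
Definition serve (f : fstate) : dist R fstate := diter serve1 (enum 'I_M) f.

Definition step (z : state) : dist R state :=
  dbind (arrive z.1) (fun Q1 =>
    dbind (serve (newf Q1 z.2)) (fun f3 => dret (newQ Q1 z.2, f3))).

Definition trans (z z' : state) : R := dprob (step z) z'.

(* tail B n z = P_z(Z(1) \notin B, ..., Z(n) \notin B) = P_z(sigma_B > n),
   sigma_B = inf {t >= 1 : Z(t) \in B} *)
Fixpoint tail (B : seq state) (n : nat) (z : state) : R :=
  if n is n'.+1 then \sum_(p <- step z | p.2 \notin B) p.1 * tail B n' p.2 else 1.

(* positive recurrence: there is a finite set B of states whose
   expected first-passage time E_z[sigma_B] = sum_n P_z(sigma_B > n)
   is finite from every initial state z *)
Definition positive_recurrent : Prop :=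
  exists B : seq state, forall z : state,
    exists C : R, forall N : nat, \sum_(n < N) tail B n z <= C.

End Model.

Definition in_capacity (R : realType) (M : nat) (K : 'I_M -> nat)
  (alpha beta gamma : R) (lam : {set 'I_M} -> R) : Prop :=
  exists lm : {set 'I_M} -> 'I_M -> R,
    (forall L m, 0 <= lm L m) /\
    (forall L, is_type L -> lam L = \sum_(m < M) lm L m) /\
    (forall m : 'I_M,
       \sum_(L : {set 'I_M} | is_type L) lm L m / rate alpha beta gamma (cls K L m) < 1).

(* Balanced-Pandas is throughput optimal by Foster's criterion for the
   Lyapunov function V(z) = sum_m U_m^2, where U_m is the workload of server m
   (its queued tasks weighted by their mean service times) plus the mean
   residual service time of the task it is serving.  Scheduling leaves every
   U_m unchanged, and a service attempt decreases E[U_m^2] by 2 U_m up to a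
   bounded term.  Arrivals contribute the cross term 2 sum_m U_m dW_m: routing
   a task to a server minimising W_m / rate costs at most gamma^-2 more than
   routing it to any server m at price U_m / rate, so averaging over a
   decomposition lambda_{L,m} witnessing that the load lies in the capacity
   region bounds the cross term by 2 sum_m U_m load_m plus a constant.  The
   drift is thus at most C - 2 sum_m U_m (1 - load_m), which is <= -1 outside
   a finite box of queue lengths because every load_m < 1. *)

From Pilot Require Import Defs.
From mathcomp Require Import all_boot all_order all_algebra reals.
From mathcomp Require Import ring lra.
Import Order.TTheory GRing.Theory Num.Theory.
Local Open Scope ring_scope.

Section Expectation.
Local Set Implicit Arguments. Local Unset Strict Implicit.
Variable R : numDomainType.
Implicit Types T S : Type.

Definition expect T (d : dist R T) (h : T -> R) : R := \sum_(p <- d) p.1 * h p.2.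

Lemma eq_expect T (d : dist R T) h g : h =1 g -> expect d h = expect d g.
Proof. by move=> hg; apply: eq_bigr => p _; rewrite hg. Qed.

Lemma expect_ret T (x : T) h : expect (dret x) h = h x.
Proof. by rewrite /expect /dret big_seq1 mul1r. Qed.

Lemma expect_bind T S (d : dist R T) (g : T -> dist R S) h :
  expect (dbind d g) h = expect d (fun x => expect (g x) h).
Proof.
rewrite /expect /dbind big_flatten big_map /=; apply: eq_bigr => p _.
by rewrite big_map mulr_sumr; apply: eq_bigr => q _; rewrite mulrA.
Qed.

Lemma expect_bind_ret T S (d : dist R T) (g : T -> S) h :
  expect (dbind d (fun x => dret (g x))) h = expect d (fun x => h (g x)).
Proof. by rewrite expect_bind; apply: eq_expect => x; rewrite expect_ret. Qed.

Lemma expectD T (d : dist R T) h g :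
  expect d (fun x => h x + g x) = expect d h + expect d g.
Proof. by rewrite /expect -big_split; apply: eq_bigr => p _; rewrite mulrDr. Qed.

Lemma expectZ T (d : dist R T) c h : expect d (fun x => c * h x) = c * expect d h.
Proof. by rewrite /expect mulr_sumr; apply: eq_bigr => p _; rewrite mulrCA. Qed.

Lemma expect_sum T I (s : seq I) (d : dist R T) (h : I -> T -> R) :
  expect d (fun x => \sum_(i <- s) h i x) = \sum_(i <- s) expect d (h i).
Proof. by rewrite /expect exchange_big; apply: eq_bigr => p _; rewrite mulr_sumr. Qed.

Lemma is_pmf_ret T (x : T) : is_pmf (dret x : dist R T).
Proof. by rewrite /is_pmf /= ler01 big_seq1. Qed.

Lemma is_pmf_bind T S (d : dist R T) (g : T -> dist R S) :
  is_pmf d -> (forall x, is_pmf (g x)) -> is_pmf (dbind d g).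
Proof.
move=> [d_ge0 d_sum1] g_pmf; split.
  elim: d d_ge0 {d_sum1} => //= p d IH /andP[p_ge0 d_ge0].
  rewrite all_cat IH // andbT all_map; case: (g_pmf p.2) => g_ge0 _.
  by apply: sub_all g_ge0 => q /= /(mulr_ge0 p_ge0).
rewrite /dbind big_flatten big_map /= -[RHS]d_sum1; apply: eq_bigr => p _.
by case: (g_pmf p.2) => _ g_sum1; rewrite big_map -mulr_sumr g_sum1 mulr1.
Qed.

Lemma expect_cst T (d : dist R T) c : is_pmf d -> expect d (fun=> c) = c.
Proof. by case=> _ d_sum1; rewrite /expect -mulr_suml d_sum1 mul1r. Qed.

Lemma ler_expect_supp T (d : dist R T) (P : pred T) h g :
  is_pmf d -> all (fun p => P p.2) d -> (forall x, P x -> h x <= g x) ->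
  expect d h <= expect d g.
Proof.
case=> d_ge0 _ + hg; rewrite /expect.
elim: d d_ge0 => [|p d IH]; first by rewrite !big_nil.
rewrite !big_cons => /= /andP[p_ge0 d_ge0] /andP[pP dP].
by rewrite lerD ?IH ?ler_wpM2l ?hg.
Qed.

Lemma ler_expect T (d : dist R T) h g :
  is_pmf d -> (forall x, h x <= g x) -> expect d h <= expect d g.
Proof. by move=> d_pmf hg; apply: (ler_expect_supp (P := predT)) => //; apply/all_predT. Qed.

Lemma expect_ge0 T (d : dist R T) h :
  is_pmf d -> (forall x, 0 <= h x) -> 0 <= expect d h.
Proof. by move=> d_pmf h_ge0; rewrite -(expect_cst 0 d_pmf) ler_expect. Qed.

Lemma all_dbind T S (d : dist R T) (g : T -> dist R S) (P : pred S) :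
  all (fun p => all (fun q => P q.2) (g p.2)) d -> all (fun q => P q.2) (dbind d g).
Proof.
elim: d => //= p d IH /andP[gp_P d_P].
by rewrite all_cat IH // andbT all_map.
Qed.

Section Iteration.
Variables (T : Type) (A : eqType) (f : T -> A -> dist R T).

Lemma diter_rcons s a x : diter f (rcons s a) x = dbind (diter f s x) (f^~ a).
Proof. by rewrite /diter foldl_rcons. Qed.

Lemma is_pmf_diter s x :
  (forall y a, a \in s -> is_pmf (f y a)) -> is_pmf (diter f s x).
Proof.
elim/last_ind: s => [|s a IH] f_pmf; first exact: is_pmf_ret.
rewrite diter_rcons; apply: is_pmf_bind => [|y].
  by apply: IH => y b bs; apply: f_pmf; rewrite mem_rcons in_cons bs orbT.
by apply: f_pmf; rewrite mem_rcons mem_head.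
Qed.

Lemma diter_all (P : seq A -> pred T) s x :
  P [::] x -> (forall s' a y, P s' y -> all (fun p => P (rcons s' a) p.2) (f y a)) ->
  all (fun p => P s p.2) (diter f s x).
Proof.
move=> P0 P_step; elim/last_ind: s => [|s a IH]; first by rewrite /= P0.
by rewrite diter_rcons; apply: all_dbind; apply: sub_all IH => p; apply: P_step.
Qed.

Lemma expect_diter_le (Phi : T -> R) (k : A -> R) s x :
  (forall y a, a \in s -> is_pmf (f y a)) ->
  (forall y a, a \in s -> expect (f y a) Phi <= Phi y + k a) ->
  expect (diter f s x) Phi <= Phi x + \sum_(a <- s) k a.
Proof.
elim/last_ind: s => [|s a IH] f_pmf f_drift; first by rewrite expect_ret big_nil addr0.
have s_sub b : b \in s -> b \in rcons s a by rewrite mem_rcons in_cons => ->; rewrite orbT.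
have a_in : a \in rcons s a by rewrite mem_rcons mem_head.
have s_pmf : is_pmf (diter f s x) by apply: is_pmf_diter => y b /s_sub; apply: f_pmf.
rewrite diter_rcons expect_bind -cats1 big_cat big_seq1 addrA.
apply: le_trans (ler_expect (g := fun y => Phi y + k a) s_pmf _) _ => [y|]; first exact: f_drift.
rewrite expectD expect_cst // lerD2r; apply: IH => y b /s_sub.
  exact: f_pmf.
exact: f_drift.
Qed.

End Iteration.

End Expectation.

Lemma sum_iota_cst (R : pzSemiRingType) n (c : R) : \sum_(a <- iota 0 n) c = n%:R * c.
Proof. by rewrite big_const_seq count_predT size_iota iter_addr_0 mulr_natl. Qed.

Lemma sqr_shift_le (R : realDomainType) (u d a s : R) : 0 <= d <= a ->
  (u + d) ^+ 2 - 2 * (u + d) + s <= u ^+ 2 - 2 * u + a ^+ 2 + s + 2 * (u * d).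
Proof. by case/andP => d_ge0 d_le; nra. Qed.

Lemma exists_nat_threshold (R : archiRealFieldType) n (a : 'I_n -> R) (c : R) :
  (forall i, 0 < a i) -> exists N : nat, forall i x, N%:R <= x -> c <= x * a i.
Proof.
move=> a_gt0; set b := \sum_i `|c / a i|.
have b_ge0 : 0 <= b by apply: sumr_ge0.
exists (Num.Def.archi_bound b) => i x Nx.
rewrite -ler_pdivrMr //; apply: le_trans (ler_norm _) _.
apply: le_trans (ltW (lt_le_trans (archi_boundP b_ge0) Nx)).
by rewrite /b (bigD1 i) //= lerDl sumr_ge0.
Qed.

Section Foster.
Local Set Implicit Arguments. Local Unset Strict Implicit.
Variables (R : realType) (M : nat) (K : 'I_M -> nat) (alpha beta gamma : R).
Variable arr : {set 'I_M} -> dist R nat.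
Local Notation step := (step K alpha beta gamma arr).
Local Notation tail := (tail K alpha beta gamma arr).
Variables (B : seq (state M)) (V : state M -> R).
Hypotheses (step_pmf : forall z, is_pmf (step z)) (V_ge0 : forall z, 0 <= V z).
Hypothesis V_drift : forall z, z \notin B -> expect (step z) V <= V z - 1.

Lemma sum_tail_succ_le N z :
  (forall y, y \notin B -> \sum_(n < N) tail B n y <= V y) ->
  \sum_(n < N.+1) tail B n z <= 1 + expect (step z) V.
Proof.
move=> tail_le; rewrite big_ord_recl lerD2l /=.
under eq_bigr => i _ do rewrite /bump /=.
rewrite exchange_big /= big_mkcond /expect; case: (step_pmf z) => + _.
elim: (step z) => [|p d IH]; first by rewrite !big_nil.
rewrite !big_cons /= => /andP[p_ge0 d_ge0]; apply: lerD; last exact: IH.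
rewrite -mulr_sumr; case: ifP => [/tail_le|_]; first exact: ler_wpM2l.
exact: mulr_ge0.
Qed.

Lemma sum_tail_le N z : z \notin B -> \sum_(n < N) tail B n z <= V z.
Proof.
elim: N z => [|N IH] z zB; first by rewrite big_ord0.
by apply: le_trans (sum_tail_succ_le z IH) _; have := V_drift zB; lra.
Qed.

Lemma foster : positive_recurrent K alpha beta gamma arr.
Proof.
exists B => z; exists (1 + expect (step z) V) => -[|N].
  by rewrite big_ord0; have := expect_ge0 (step_pmf z) V_ge0; lra.
by apply: sum_tail_succ_le => y; apply: sum_tail_le.
Qed.

End Foster.

Section BalancedPandas.
Local Set Implicit Arguments. Local Unset Strict Implicit.
Variables (R : realType) (M : nat) (K : 'I_M -> nat) (alpha beta gamma : R).
Variable arr : {set 'I_M} -> dist R nat.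
Hypotheses (gamma_gt0 : 0 < gamma) (gamma_lt_beta : gamma < beta).
Hypotheses (beta_lt_alpha : beta < alpha) (alpha_le1 : alpha <= 1).
Hypothesis arr_pmf : forall L : {set 'I_M}, is_type L -> is_pmf (arr L).
Implicit Types (Q : qstate M) (f : fstate M) (z : state M).
Implicit Types (m : 'I_M) (c : 'I_3) (L : {set 'I_M}).

Local Notation r := (rate alpha beta gamma).
Local Notation W := (Defs.W alpha beta gamma).
Local Notation cls := (cls K).
Local Notation cost := (cost K alpha beta gamma).
Local Notation best := (best K alpha beta gamma).
Local Notation route1 := (route1 K alpha beta gamma).
Local Notation arrive_type := (arrive_type K alpha beta gamma arr).
Local Notation arrive := (arrive K alpha beta gamma arr).
Local Notation serve1 := (serve1 alpha beta gamma).
Local Notation serve := (serve alpha beta gamma).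
Local Notation step := (step K alpha beta gamma arr).

Lemma rate_ge_gamma c : gamma <= r c.
Proof.
have gamma_lt_alpha := lt_trans gamma_lt_beta beta_lt_alpha.
by rewrite /rate; case: ifP => _; last case: ifP => _; rewrite ?lexx // ltW.
Qed.

Lemma rate_le1 c : r c <= 1.
Proof.
have beta_lt1 := lt_le_trans beta_lt_alpha alpha_le1.
have gamma_lt1 := lt_trans gamma_lt_beta beta_lt1.
by rewrite /rate; case: ifP => _; last case: ifP => _; rewrite // ltW.
Qed.

Lemma rate_gt0 c : 0 < r c.
Proof. exact: lt_le_trans gamma_gt0 (rate_ge_gamma c). Qed.

Lemma invr_rate_le c : (r c)^-1 <= gamma^-1.
Proof. by rewrite lef_pV2 ?posrE ?rate_gt0 ?rate_ge_gamma. Qed.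

Lemma invr_rate_ge1 c : 1 <= (r c)^-1.
Proof. by rewrite invf_ge1 ?rate_gt0 ?rate_le1. Qed.

Lemma W_ge0 Q m : 0 <= W Q m.
Proof. by apply: sumr_ge0 => c _; rewrite divr_ge0 ?ler0n ?ltW ?rate_gt0. Qed.

Lemma queue_le_W Q m c : (Q (m, c))%:R <= W Q m.
Proof.
rewrite /Defs.W (bigD1 c) //= -[X in X <= _]addr0 lerD //.
  by rewrite ler_peMr ?invr_rate_ge1.
by apply: sumr_ge0 => c' _; rewrite divr_ge0 ?ler0n ?ltW ?rate_gt0.
Qed.

(* By memorylessness of geometric services, the expected remaining service
   time of the task in service is [1 / rate], whatever its age. *)
Definition resid (o : option 'I_3) : R := if o is Some c then (r c)^-1 else 0.
Definition total_work (z : state M) m : R := W z.1 m + resid (z.2 m).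
Definition lyapunov (z : state M) : R := \sum_m total_work z m ^+ 2.

Lemma resid_ge0 o : 0 <= resid o.
Proof. by case: o => [c|] //=; rewrite invr_ge0 ltW ?rate_gt0. Qed.

Lemma resid_le o : resid o <= gamma^-1.
Proof. by case: o => [c|] /=; [exact: invr_rate_le | rewrite invr_ge0 ltW]. Qed.

Lemma total_work_ge0 z m : 0 <= total_work z m.
Proof. by rewrite addr_ge0 ?W_ge0 ?resid_ge0. Qed.

Lemma queue_le_total_work z m c : (z.1 (m, c))%:R <= total_work z m.
Proof. by rewrite -[X in X <= _]addr0 lerD ?queue_le_W ?resid_ge0. Qed.

Lemma lyapunov_ge0 z : 0 <= lyapunov z.
Proof. by apply: sumr_ge0 => m _; apply: sqr_ge0. Qed.

Definition serve_mean (h : option 'I_3 -> R) (o : option 'I_3) : R :=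
  if o is Some c then r c * h None + (1 - r c) * h (Some c) else h None.

Lemma is_pmf_serve1 f m : is_pmf (serve1 f m).
Proof.
rewrite /serve1; case: (f m) => [c|]; last exact: is_pmf_ret.
split; last by rewrite big_cons big_seq1 addrC subrK.
by rewrite /= ltW ?rate_gt0 // subr_ge0 rate_le1.
Qed.

Lemma is_pmf_serve f : is_pmf (serve f).
Proof. by apply: is_pmf_diter => y m _; apply: is_pmf_serve1. Qed.

Lemma expect_serve1_at f a m h :
  expect (serve1 f a) (fun g => h (g m)) = if a == m then serve_mean h (f m) else h (f m).
Proof.
rewrite /serve1; case fa: (f a) => [c|].
  2: by rewrite expect_ret; case: eqP => // am; rewrite -am fa.
rewrite /expect big_cons big_seq1 /= ffunE.
by case: (eqVneq m a) => [->|_]; [rewrite fa | ring].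
Qed.

Lemma expect_diter_serve1_at s f m h : uniq s ->
  expect (diter serve1 s f) (fun g => h (g m)) =
  if m \in s then serve_mean h (f m) else h (f m).
Proof.
elim/last_ind: s h => [|s a IH] h; first by rewrite expect_ret.
rewrite rcons_uniq => /andP[a_notin s_uniq].
rewrite diter_rcons expect_bind.
under eq_expect => y do rewrite expect_serve1_at.
rewrite mem_rcons in_cons; case: (eqVneq m a) => [m_a|_] /=; last exact: IH.
by subst a; rewrite IH // (negbTE a_notin).
Qed.

Lemma expect_serve_at f m h :
  expect (serve f) (fun g => h (g m)) = serve_mean h (f m).
Proof. by rewrite expect_diter_serve1_at ?enum_uniq ?mem_enum. Qed.

Lemma locality_cases c : [\/ c = Cl, c = Ck | c = Cr].
Proof.
by case: c => -[|[|[|//]]] ci; [apply: Or31 | apply: Or32 | apply: Or33]; apply: val_inj.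
Qed.

Lemma pickq_gt0 Q m c : pickq Q m = Some c -> (0 < Q (m, c))%N.
Proof. by rewrite /pickq; do 3!case: ifP => [? [<-] //|_]. Qed.

Lemma pickq_None Q m c : pickq Q m = None -> Q (m, c) = 0%N.
Proof.
rewrite /pickq; case: ifP => // Ql; case: ifP => // Qk; case: ifP => // Qr _.
by apply/eqP; rewrite -leqn0 leqNgt; case: (locality_cases c) => ->; rewrite ?Ql ?Qk ?Qr.
Qed.

(* Taking a task into service moves [1 / rate] of work from the queue to
   the residual, so scheduling preserves the total work of every server. *)
Lemma total_work_newQ Q f m :
  total_work (newQ Q f, newf Q f) m = total_work (Q, f) m.
Proof.
rewrite /total_work /= /newf ffunE.
have newQ_eq c' :
    ~~ ((f m == None) && (pickq Q m == Some c')) -> newQ Q f (m, c') = Q (m, c').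
  by rewrite /newQ ffunE /= => /negbTE ->; rewrite subn0.
case fm: (f m) => [c|].
  by congr (_ + _); apply: eq_bigr => c' _; rewrite newQ_eq ?fm.
case pq: (pickq Q m) => [c|]; last first.
  by congr (_ + _); apply: eq_bigr => c' _; rewrite newQ_eq ?fm ?pq.
rewrite /Defs.W (bigD1 c) //= [in RHS](bigD1 c) //= addr0.
have -> : \sum_(c' < 3 | c' != c) (newQ Q f (m, c'))%:R / r c' =
          \sum_(c' < 3 | c' != c) (Q (m, c'))%:R / r c'.
  by apply: eq_bigr => c' c'_neq; rewrite newQ_eq // fm pq /= eq_sym.
rewrite /newQ ffunE /= fm pq !eqxx /= natrB ?pickq_gt0 // mulrBl mul1r.
by rewrite addrAC subrK.
Qed.

Lemma total_work_newf_None Q f m : newf Q f m = None -> total_work (Q, f) m = 0.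
Proof.
rewrite /newf ffunE /total_work /=; case: (f m) => // /pickq_None Q0.
by rewrite addr0; apply: big1 => c _; rewrite Q0 mul0r.
Qed.

(* One service attempt ends the task with probability [rate], which removes
   its residual [1 / rate] from the total work. *)
Lemma expect_serve_lyapunov Q f :
  expect (serve (newf Q f)) (fun f' => lyapunov (newQ Q f, f'))
  <= \sum_m (total_work (Q, f) m ^+ 2 - 2 * total_work (Q, f) m + gamma^-1).
Proof.
rewrite /lyapunov expect_sum; apply: ler_sum => m _.
rewrite (expect_serve_at _ _ (fun o => (W (newQ Q f) m + resid o) ^+ 2)).
have := total_work_newQ Q f m; rewrite {1}/total_work /=.
case: (newf Q f m) (@total_work_newf_None Q f m) => [c _ <-|/(_ erefl) tw0 tw_eq] /=.
  set u := W _ m; have r_neq0 : r c != 0 by rewrite gt_eqF ?rate_gt0.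
  have -> : r c * (u + 0) ^+ 2 + (1 - r c) * (u + (r c)^-1) ^+ 2 =
            (u + (r c)^-1) ^+ 2 - 2 * (u + (r c)^-1) + (r c)^-1 by field.
  by rewrite lerD2l invr_rate_le.
by rewrite -tw_eq in tw0 *; rewrite tw0 expr0n /= mulr0 subr0 add0r invr_ge0 ltW.
Qed.

Definition grows_by Q Q' (k : nat) : bool :=
  [forall m, W Q m <= W Q' m <= W Q m + k%:R / gamma].

Lemma W_incq Q i m : W (incq Q i) m = W Q m + (if m == i.1 then (r i.2)^-1 else 0).
Proof.
rewrite /Defs.W /incq; under eq_bigr => c _ do rewrite ffunE natrD mulrDl.
rewrite big_split /=; congr (_ + _); case: i => m' c' /=.
case: eqP => [->|m_neq].
  rewrite (bigD1 c') //= xpair_eqE !eqxx mul1r big1 ?addr0 // => c c_neq.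
  by rewrite xpair_eqE eqxx (negbTE c_neq) mul0r.
by apply: big1 => c _; rewrite xpair_eqE; case: eqP => //= _; rewrite mul0r.
Qed.

Lemma grows_by_refl Q : grows_by Q Q 0.
Proof. by apply/forallP => m; rewrite mul0r addr0 lexx. Qed.

Lemma grows_by_trans Q1 Q2 Q3 a b :
  grows_by Q1 Q2 a -> grows_by Q2 Q3 b -> grows_by Q1 Q3 (a + b).
Proof.
move=> /forallP Q12 /forallP Q23; apply/forallP => m.
move: (Q12 m) (Q23 m); rewrite natrD mulrDl.
by move=> /andP[? ?] /andP[? ?]; apply/andP; split; lra.
Qed.

Lemma grows_byW Q Q' a b : (a <= b)%N -> grows_by Q Q' a -> grows_by Q Q' b.
Proof.
move=> a_le_b /forallP QQ'; apply/forallP => m; case/andP: (QQ' m) => -> /le_trans; apply.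
by rewrite lerD2l ler_pM2r ?invr_gt0 // ler_nat.
Qed.

Lemma grows_by_incq Q i : grows_by Q (incq Q i) 1.
Proof.
apply/forallP => m; rewrite W_incq mul1r lerDl lerD2l.
by case: eqP => _; apply/andP; split; rewrite ?lexx ?invr_rate_le ?invr_ge0 ?ltW ?rate_gt0.
Qed.

Definition max_arrivals L : nat := \max_(p <- arr L) p.2.
Definition max_slot_arrivals : nat := \sum_(L <- types M) max_arrivals L.

Lemma route1_grows Q0 L Q : all (fun p => grows_by Q p.2 1) (route1 Q0 L Q).
Proof.
rewrite /Defs.route1; apply: (all_dbind (P := grows_by Q ^~ 1)); rewrite /unif all_map.
by apply/allP => m _ /=; rewrite grows_by_incq.
Qed.

Lemma routes_grow Q0 L Q n :
  all (fun p => grows_by Q p.2 n) (diter (fun Q' (_ : nat) => route1 Q0 L Q') (iota 0 n) Q).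
Proof.
have := diter_all (f := fun Q' (_ : nat) => route1 Q0 L Q')
  (P := fun s Q' => grows_by Q Q' (size s)) (iota 0 n) (x := Q).
rewrite size_iota; apply=> [|s a y Qy]; first exact: grows_by_refl.
apply: sub_all (route1_grows Q0 L y) => p /(grows_by_trans Qy).
by rewrite size_rcons addn1.
Qed.

Lemma arrive_grows Q0 : all (fun p => grows_by Q0 p.2 max_slot_arrivals) (arrive Q0).
Proof.
have := diter_all (f := arrive_type Q0)
  (P := fun s Q => grows_by Q0 Q (\sum_(L <- s) max_arrivals L)) (types M) (x := Q0).
apply=> [|s L y Qy]; first by rewrite big_nil grows_by_refl.
rewrite /Defs.arrive_type.
apply: (all_dbind (P := grows_by Q0 ^~ _)); apply/allP => p p_arr.
have p_le : (p.2 <= max_arrivals L)%N by apply: leq_bigmax_seq.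
apply: sub_all (routes_grow Q0 L y p.2) => q /(grows_by_trans Qy) /grows_byW; apply.
by rewrite -cats1 big_cat big_seq1 leq_add2l.
Qed.

Lemma mem_types L : (L \in types M) = is_type L.
Proof. by rewrite mem_enum. Qed.

Lemma sum_types (F : {set 'I_M} -> R) : \sum_(L <- types M) F L = \sum_(L | is_type L) F L.
Proof. by rewrite big_enum; apply: eq_bigl => L; rewrite inE. Qed.

Lemma best_cost_le Q L m m' : m' \in best Q L -> cost Q L m' <= cost Q L m.
Proof. by rewrite inE => /forallP. Qed.

Lemma type_best_neq0 Q L : is_type L -> best Q L != set0.
Proof.
rewrite /is_type => /eqP L3; have /card_gt0P[m0 _] : (0 < #|L|)%N by rewrite L3.
case: (@arg_minP _ _ _ m0 xpredT (cost Q L) isT) => m _ m_min.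
by apply/set0Pn; exists m; rewrite inE; apply/forallP => m'; apply: m_min.
Qed.

Lemma is_pmf_unif (S : {set 'I_M}) : S != set0 -> is_pmf (unif R S).
Proof.
rewrite -card_gt0 => S_gt0; split.
  by rewrite /unif all_map; apply/allP => m _ /=; rewrite invr_ge0 ler0n.
rewrite /unif big_map big_enum sumr_const -(mulr_natr (#|S|%:R^-1 : R)) mulVf //.
by rewrite pnatr_eq0 -lt0n.
Qed.

Lemma is_pmf_route1 Q0 L Q : best Q0 L != set0 -> is_pmf (route1 Q0 L Q).
Proof. by move/is_pmf_unif/is_pmf_bind; apply=> m; apply: is_pmf_ret. Qed.

Lemma is_pmf_arrive_type Q0 Q L : is_type L -> is_pmf (arrive_type Q0 Q L).
Proof.
move=> L_type; apply: is_pmf_bind (arr_pmf L_type) _ => n.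
by apply: is_pmf_diter => y _ _; apply: is_pmf_route1; apply: type_best_neq0.
Qed.

Lemma is_pmf_arrive Q0 : is_pmf (arrive Q0).
Proof. by apply: is_pmf_diter => Q L; rewrite mem_types; apply: is_pmf_arrive_type. Qed.

Lemma is_pmf_step z : is_pmf (step z).
Proof.
apply: is_pmf_bind (is_pmf_arrive _) _ => Q1.
by apply: is_pmf_bind (is_pmf_serve _) _ => f'; apply: is_pmf_ret.
Qed.

(* The cross term of [lyapunov] after the arrivals: the only part of the
   drift that depends on the routing decisions. *)
Definition lyap_lin z Q : R := \sum_m total_work z m * W Q m.

Lemma lyap_lin_incq z Q m c :
  lyap_lin z (incq Q (m, c)) = lyap_lin z Q + total_work z m / r c.
Proof.
rewrite /lyap_lin; under eq_bigr => m' _ do rewrite W_incq mulrDr.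
rewrite big_split /=; congr (_ + _).
by rewrite (bigD1 m) //= eqxx big1 ?addr0 // => m' /negbTE ->; rewrite mulr0.
Qed.

Lemma cost_le_total_work z L m : cost z.1 L m <= total_work z m / r (cls L m).
Proof.
by rewrite /Defs.cost /total_work ler_wpM2r // ?lerDl ?resid_ge0 // invr_ge0 ltW ?rate_gt0.
Qed.

(* The routing rule sees the queue workloads only, not the residuals: this
   costs at most [gamma^-2] per task. *)
Lemma routed_work_le z L m m' : m' \in best z.1 L ->
  total_work z m' / r (cls L m') <= cost z.1 L m + gamma^-1 ^+ 2.
Proof.
move=> m'_best; rewrite /total_work mulrDl; apply: lerD; first exact: best_cost_le.
rewrite expr2; apply: ler_pM; rewrite ?resid_ge0 ?resid_le ?invr_rate_le //.
by rewrite invr_ge0 ltW ?rate_gt0.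
Qed.

Lemma expect_route1_le z L Q m : best z.1 L != set0 ->
  expect (route1 z.1 L Q) (lyap_lin z) <= lyap_lin z Q + (cost z.1 L m + gamma^-1 ^+ 2).
Proof.
move=> best_neq0; rewrite /Defs.route1 expect_bind.
rewrite -(expect_cst (lyap_lin z Q + _) (is_pmf_unif best_neq0)).
apply: (ler_expect_supp (P := fun m' => m' \in best z.1 L)) => [||m' m'_best].
- exact: is_pmf_unif.
- by rewrite /unif all_map; apply/allP => m' /=; rewrite mem_enum.
- by rewrite expect_ret lyap_lin_incq lerD2l routed_work_le.
Qed.

Lemma expect_arrive_type_le z Q L m : is_type L ->
  expect (arrive_type z.1 Q L) (lyap_lin z)
    <= lyap_lin z Q + mean (arr L) * (cost z.1 L m + gamma^-1 ^+ 2).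
Proof.
move=> L_type; set c := cost z.1 L m + _.
have best_neq0 := type_best_neq0 z.1 L_type.
rewrite /Defs.arrive_type expect_bind.
apply: le_trans (ler_expect (g := fun n => lyap_lin z Q + c * n%:R) (arr_pmf L_type) _) _.
  move=> n; rewrite mulrC -sum_iota_cst.
  by apply: expect_diter_le => y _ _; [apply: is_pmf_route1 | apply: expect_route1_le].
rewrite expectD (expect_cst _ (arr_pmf L_type)).
by rewrite (expectZ (arr L) c (fun n => n%:R)) mulrC.
Qed.

Lemma expect_arrive_type_weighted z Q L (w : 'I_M -> R) :
  is_type L -> (forall m, 0 <= w m) -> mean (arr L) = \sum_m w m ->
  expect (arrive_type z.1 Q L) (lyap_lin z)
    <= lyap_lin z Q + \sum_m w m * (total_work z m / r (cls L m) + gamma^-1 ^+ 2).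
Proof.
move=> L_type w_ge0 mean_w; have /set0Pn[mL mL_best] := type_best_neq0 z.1 L_type.
apply: le_trans (expect_arrive_type_le z Q mL L_type) _.
rewrite lerD2l mean_w mulr_suml; apply: ler_sum => m _; rewrite ler_wpM2l // lerD2r.
exact: le_trans (best_cost_le m mL_best) (cost_le_total_work z L m).
Qed.

Variable lm : {set 'I_M} -> 'I_M -> R.
Hypothesis lm_ge0 : forall L m, 0 <= lm L m.
Hypothesis mean_arr : forall L, is_type L -> mean (arr L) = \sum_m lm L m.

Definition server_load m : R := \sum_(L | is_type L) lm L m / r (cls L m).
Definition total_rate : R := \sum_(L <- types M) \sum_m lm L m.

Lemma expect_arrive_le z :
  expect (arrive z.1) (lyap_lin z)
    <= lyap_lin z z.1 + \sum_m total_work z m * server_load m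
       + gamma^-1 ^+ 2 * total_rate.
Proof.
rewrite -addrA.
have -> : \sum_m total_work z m * server_load m + gamma^-1 ^+ 2 * total_rate =
    \sum_(L <- types M) \sum_m lm L m * (total_work z m / r (cls L m) + gamma^-1 ^+ 2).
  rewrite /server_load /total_rate mulr_sumr.
  under eq_bigr => m _ do rewrite -sum_types mulr_sumr.
  rewrite exchange_big -big_split; apply: eq_bigr => L _ /=.
  by rewrite mulr_sumr -big_split; apply: eq_bigr => m _ /=; ring.
apply: expect_diter_le => Q L; rewrite mem_types => L_type.
  exact: is_pmf_arrive_type.
exact: expect_arrive_type_weighted L_type (lm_ge0 L) (mean_arr L_type).
Qed.

Definition work_jump : R := max_slot_arrivals%:R / gamma.
Definition drift_const : R :=
  (work_jump ^+ 2 + gamma^-1) *+ M + 2 * (gamma^-1 ^+ 2 * total_rate).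

Lemma arrival_work_le z Q1 : grows_by z.1 Q1 max_slot_arrivals ->
  \sum_m (total_work (Q1, z.2) m ^+ 2 - 2 * total_work (Q1, z.2) m + gamma^-1)
  <= \sum_m (total_work z m ^+ 2 - 2 * total_work z m + work_jump ^+ 2 + gamma^-1)
     + 2 * (lyap_lin z Q1 - lyap_lin z z.1).
Proof.
move=> /forallP Q1_grows; rewrite /lyap_lin -sumrB mulr_sumr -big_split /=.
apply: ler_sum => m _; rewrite -mulrBr.
have -> : total_work (Q1, z.2) m = total_work z m + (W Q1 m - W z.1 m).
  by rewrite /total_work /=; ring.
apply: sqr_shift_le; case/andP: (Q1_grows m) => lo hi.
by rewrite subr_ge0 lo lerBlDl.
Qed.

Lemma lyapunov_drift z :
  expect (step z) lyapunov
    <= lyapunov z + drift_const - 2 * \sum_m total_work z m * (1 - server_load m).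
Proof.
case: z => Q0 f; set z := (Q0, f).
set S := \sum_m (total_work z m ^+ 2 - 2 * total_work z m + work_jump ^+ 2 + gamma^-1).
rewrite /Defs.step expect_bind.
apply: le_trans (ler_expect (g := fun Q1 => \sum_m (total_work (Q1, f) m ^+ 2
    - 2 * total_work (Q1, f) m + gamma^-1)) (is_pmf_arrive Q0) _) _.
  by move=> Q1; rewrite expect_bind_ret; apply: expect_serve_lyapunov.
apply: le_trans (ler_expect_supp (g := fun Q1 => S + 2 * (lyap_lin z Q1 - lyap_lin z Q0))
    (is_pmf_arrive Q0) (arrive_grows Q0) _) _.
  by move=> Q1; apply: (arrival_work_le (z := z)).
rewrite expectD (expect_cst _ (is_pmf_arrive Q0)) expectZ expectD.
rewrite (expect_cst _ (is_pmf_arrive Q0)).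
have S_eq : S = lyapunov z - 2 * \sum_m total_work z m + (work_jump ^+ 2 + gamma^-1) *+ M.
  by rewrite /S 3![in LHS]big_split /= sumrN -mulr_sumr !sumr_const card_ord mulrnDl !addrA.
have load_eq : \sum_m total_work z m * (1 - server_load m) =
               \sum_m total_work z m - \sum_m total_work z m * server_load m.
  by rewrite -sumrB; apply: eq_bigr => m _; rewrite mulrBr mulr1.
have := expect_arrive_le z; rewrite S_eq load_eq /drift_const; lra.
Qed.

Definition box (N : nat) : seq (state M) :=
  [seq ([ffun i => nat_of_ord (g i)], f)
     | g : {ffun 'I_M * 'I_3 -> 'I_N.+1} <- enum {: _}, f : fstate M <- enum {: _}].

Lemma mem_box N z : (forall i, z.1 i <= N)%N -> z \in box N.
Proof.
case: z => Q f /= Q_le; pose g := [ffun i => inord (Q i) : 'I_N.+1].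
have -> : Q = [ffun i => nat_of_ord (g i)].
  by apply/ffunP => i; rewrite !ffunE inordK // ltnS.
by apply: allpairs_f; rewrite mem_enum.
Qed.

Lemma lyapunov_drift_outside_box : (forall m, server_load m < 1) ->
  exists N, forall z, z \notin box N -> expect (step z) lyapunov <= lyapunov z - 1.
Proof.
move=> load_lt1.
have [|N threshold] :=
    @exists_nat_threshold _ _ (fun m => 2 * (1 - server_load m)) (drift_const + 1).
  by move=> m; rewrite mulr_gt0 // subr_gt0.
exists N => z z_out.
have [[m c] N_lt] : exists i, (N < z.1 i)%N.
  apply/existsP; move: z_out; apply: contraR => /existsPn Q_le.
  by apply: mem_box => i; rewrite leqNgt Q_le.
have big_term : drift_const + 1 <= total_work z m * (2 * (1 - server_load m)).
  apply: threshold; apply: le_trans (queue_le_total_work z m c).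
  by rewrite ler_nat ltnW.
have : total_work z m * (2 * (1 - server_load m))
       <= 2 * \sum_m' total_work z m' * (1 - server_load m').
  rewrite mulrCA ler_pM2l // (bigD1 m) //= lerDl; apply: sumr_ge0 => m' _.
  by rewrite mulr_ge0 ?total_work_ge0 // subr_ge0 ltW.
have := lyapunov_drift z; lra.
Qed.

End BalancedPandas.

Theorem theorem3p3 (R : realType) (M : nat) (K : 'I_M -> nat)
  (alpha beta gamma : R) (arr : {set 'I_M} -> dist R nat) :
  0 < gamma -> gamma < beta -> beta < alpha -> alpha <= 1 ->
  (forall L : {set 'I_M}, is_type L -> is_pmf (arr L)) ->
  in_capacity K alpha beta gamma (fun L => mean (arr L)) ->
  positive_recurrent K alpha beta gamma arr.
Proof.
move=> gamma_gt0 gamma_lt_beta beta_lt_alpha alpha_le1 arr_pmf.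
case=> lm [lm_ge0 [mean_arr load_lt1]].
have [N drift_neg] := lyapunov_drift_outside_box gamma_gt0 gamma_lt_beta beta_lt_alpha
  alpha_le1 arr_pmf lm_ge0 mean_arr load_lt1.
apply: (foster (B := box M N) (V := lyapunov alpha beta gamma) _ _ drift_neg).
- exact: is_pmf_step.
- exact: lyapunov_ge0.
Qed.
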